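(* Let $N=(S,E,F,I)$ be a pure 1-occurrence Petri net. With notation $s^\bullet=\{t\mid F(s,t)>0\}$, ${}^\bullet s=\{t\mid F(t,s)>0\}$, ${}^\bullet Y(s)=\sum_{t\in Y}F(s,t)$, $X^\bullet(s)=\sum_{t\in X}F(t,s)$, and ${}^n s=\{X\subseteq{}^\bullet s\mid X^\bullet(s)\ge n\}$ for $n\in\mathbb{Z}$, define for each finite $Y\subseteq E$: $S_Y=\{s\in S\mid Y\subseteq s^\bullet,\ {}^\bullet Y(s)-I(s)>0\}$ and ${}^Y s={}^{\,{}^\bullet Y(s)-I(s)}s$. Define the event structure $(E,\vdash_N)$ by: for finite $Y$, $X\vdash_N Y$ iff $X=\bigcup_{s\in S_Y}X_s$ for some choice of $X_s\in{}^Y s$ ($s\in S_Y$); and for infinite $Y$, $\emptyset\vdash_N Y$ (and no other enablings of infinite sets). Then the finite left-closed configurations of $(E,\vdash_N)$ are exactly the configurations of $N$.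
   Context: A Petri net $(S,E,F,I)$: places $S$, transitions $E$, $F:(S\times E\cup E\times S)\to\mathbb{N}$, $I:S\to\mathbb{N}$. A finite multiset $X$ of transitions is a configuration iff $I(s)-\sum_tF(s,t)X(t)+\sum_tX(t)F(t,s)\ge0$ for all $s$. A 1-occurrence net is one in which every configuration is a set; a net is pure if no place $s$ and transition $t$ have both $F(s,t)>0$ and $F(t,s)>0$. For an event structure $(E,\vdash)$ with $\vdash\subseteq\mathcal{P}(E)\times\mathcal{P}(E)$, a set $X\subseteq E$ is a left-closed configuration iff for every $Y\subseteq X$ there is $Z\subseteq X$ with $Z\vdash Y$. *)

From mathcomp Require Import all_boot all_algebra.
From mathcomp Require Import finmap boolp classical_sets cardinality.
Set Implicit Arguments. Unset Strict Implicit. Unset Printing Implicit Defensive.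
Import GRing.Theory Num.Theory.
Local Open Scope classical_set_scope.
Local Open Scope ring_scope.

Section PetriNets.
(* A Petri net (S, E, F, I): Fpre s t = F(s,t), Fpost t s = F(t,s). *)
Variables (S : Type) (E : choiceType).
Variables (Fpre : S -> E -> nat) (Fpost : E -> S -> nat) (I : S -> nat).

Definition msupp (X : E -> nat) : set E := [set t | (0 < X t)%N].

Definition fin_mset (X : E -> nat) : Prop := finite_set (msupp X).

Definition net_config (X : E -> nat) : Prop :=
  fin_mset X /\
  forall s : S,
    0 <= (I s)%:Z
         - (\sum_(t <- fset_set (msupp X)) (Fpre s t * X t)%N)%:Z
         + (\sum_(t <- fset_set (msupp X)) (X t * Fpost t s)%N)%:Z.

Definition one_occurrence : Prop :=
  forall X, net_config X -> forall t, (X t <= 1)%N.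

Definition pure_net : Prop :=
  forall s t, ~ ((0 < Fpre s t)%N /\ (0 < Fpost t s)%N).

Definition postset (s : S) : set E := [set t | (0 < Fpre s t)%N].
Definition preset (s : S) : set E := [set t | (0 < Fpost t s)%N].

Definition pre_sum (Y : set E) (s : S) : nat :=
  \sum_(t <- fset_set Y) Fpre s t.
Definition post_sum (X : set E) (s : S) : nat :=
  \sum_(t <- fset_set X) Fpost t s.

(* ^n s = { X subset ^bullet s | X^bullet(s) >= n }; for an infinite X the
   sum X^bullet(s) is infinite (every term is >= 1), hence >= n. *)
Definition nset (n : int) (s : S) : set (set E) :=
  [set X | X `<=` preset s /\
           (~ finite_set X \/ n <= (post_sum X s)%:Z)].

Definition S_of (Y : set E) : set S :=
  [set s | Y `<=` postset s /\ 0 < (pre_sum Y s)%:Z - (I s)%:Z].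

Definition Yset (Y : set E) (s : S) : set (set E) :=
  nset ((pre_sum Y s)%:Z - (I s)%:Z) s.

Definition enablesN (X Y : set E) : Prop :=
  (finite_set Y /\
     exists Xs : S -> set E,
       (forall s, S_of Y s -> Yset Y s (Xs s)) /\
       X = \bigcup_(s in S_of Y) Xs s)
  \/ (~ finite_set Y /\ X = set0).

End PetriNets.

Definition left_closed_config (E : Type) (vdash : set E -> set E -> Prop)
  (X : set E) : Prop :=
  forall Y, Y `<=` X -> exists Z, Z `<=` X /\ vdash Z Y.

From mathcomp Require Import all_boot all_algebra.
From mathcomp Require Import finmap boolp classical_sets cardinality.
From mathcomp Require Import zify.
Set Implicit Arguments. Unset Strict Implicit. Unset Printing Implicit Defensive.
Local Open Scope classical_set_scope.

(* For a set A of transitions (a multiset with multiplicities <= 1) both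
   conditions reduce to the same inequality  ^•A(s) <= I(s) + A^•(s)  at every
   place s.  If A satisfies it and Y ⊆ A, then taking X_s := A ∩ ^•s for
   s ∈ S_Y gives an enabling of Y inside A, since X_s^•(s) = A^•(s) >=
   ^•A(s) - I(s) >= ^•Y(s) - I(s).  Conversely, the enabling inside A of
   Y := A ∩ s^• provides, when s ∈ S_Y, some X_s ⊆ A with
   ^•A(s) - I(s) = ^•Y(s) - I(s) <= X_s^•(s) <= A^•(s); when s ∉ S_Y the
   inequality holds outright. *)

Section FiniteSums.
Variable E : choiceType.

Lemma sum_fset_set_sub_eq (C B : set E) (f : E -> nat) :
  finite_set B -> C `<=` B -> (forall t, B t -> ~ C t -> f t = 0%N) ->
  (\sum_(t <- fset_set C) f t = \sum_(t <- fset_set B) f t)%N.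
Proof.
move=> fB CB f0; have fC : finite_set C by apply: sub_finite_set fB.
apply: big_fset_incl; first by rewrite -fset_set_sub.
move=> x; rewrite !in_fset_set // !inE => Bx Cx; apply: f0 => // Cx'.
by move/negP: Cx; apply; apply/asboolP.
Qed.

Lemma sum_fset_set_sub_le (C B : set E) (f : E -> nat) :
  finite_set B -> C `<=` B ->
  (\sum_(t <- fset_set C) f t <= \sum_(t <- fset_set B) f t)%N.
Proof.
move=> fB CB; have fC : finite_set C by apply: sub_finite_set fB.
rewrite (eq_big_seq (fun t => if t \in fset_set C then f t else 0%N)); last first.
  by move=> x ->.
rewrite (big_fset_incl _ (B := fset_set B)).
- by apply: leq_sum => i _; case: ifP.
- by rewrite -fset_set_sub.
- by move=> x _ /negbTE ->.
Qed.

End FiniteSums.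

Section SetConfigurations.
Variables (S : Type) (E : choiceType).
Variables (Fpre : S -> E -> nat) (Fpost : E -> S -> nat) (I : S -> nat).

Definition nonneg_marking (A : set E) : Prop :=
  forall s, (pre_sum Fpre A s <= I s + post_sum Fpost A s)%N.

Lemma pre_sum_setI_postset (A : set E) (s : S) : finite_set A ->
  pre_sum Fpre (A `&` postset Fpre s) s = pre_sum Fpre A s.
Proof.
move=> fA; apply: sum_fset_set_sub_eq => // t At.
by rewrite /postset /=; case: (Fpre s t) => // n; case.
Qed.

Lemma post_sum_setI_preset (A : set E) (s : S) : finite_set A ->
  post_sum Fpost (A `&` preset Fpost s) s = post_sum Fpost A s.
Proof.
move=> fA; apply: sum_fset_set_sub_eq => // t At.
by rewrite /preset /=; case: (Fpost t s) => // n; case.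
Qed.

Lemma net_config_setE (X : E -> nat) : fin_mset X -> (forall t, (X t <= 1)%N) ->
  net_config Fpre Fpost I X <-> nonneg_marking (msupp X).
Proof.
move=> fX X1.
have X_supp t : t \in fset_set (msupp X) -> X t = 1%N.
  by rewrite in_fset_set // inE /msupp /= => Xt; apply/eqP; rewrite eqn_leq X1.
have pre_eq s : (\sum_(t <- fset_set (msupp X)) (Fpre s t * X t)%N)%N
                = pre_sum Fpre (msupp X) s.
  by apply: eq_big_seq => t /X_supp ->; rewrite muln1.
have post_eq s : (\sum_(t <- fset_set (msupp X)) (X t * Fpost t s)%N)%N
                 = post_sum Fpost (msupp X) s.
  by apply: eq_big_seq => t /X_supp ->; rewrite mul1n.
split=> [[_ H] s | H]; last split=> // s; by move: (H s); rewrite pre_eq post_eq; lia.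
Qed.

Lemma nonneg_marking_left_closed (A : set E) : finite_set A ->
  nonneg_marking A -> left_closed_config (enablesN Fpre Fpost I) A.
Proof.
move=> fA mA Y YA.
exists (\bigcup_(s in S_of Fpre I Y) (A `&` preset Fpost s)); split.
  by move=> t [s _ []].
left; split; first exact: sub_finite_set fA.
exists (fun s => A `&` preset Fpost s); split => // s _.
split; first by move=> t [].
right; rewrite post_sum_setI_preset //.
have := sum_fset_set_sub_le (Fpre s) fA YA; have := mA s.
rewrite /pre_sum; lia.
Qed.

Lemma left_closed_nonneg_marking (A : set E) : finite_set A ->
  left_closed_config (enablesN Fpre Fpost I) A -> nonneg_marking A.
Proof.
move=> fA lcA s; set Y := A `&` postset Fpre s.
have fY : finite_set Y by apply: sub_finite_set fA; apply: subIsetl.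
have [Z [ZA [[_ [Xs [XsY Zeq]]] | [nfY _]]]] := lcA Y (@subIsetl _ _ _);
  last by [].
have preY := pre_sum_setI_postset s fA; rewrite -/Y in preY.
have [SYs | nSYs] := pselect (S_of Fpre I Y s); last first.
  have : ~ (0 < (pre_sum Fpre Y s)%:Z - (I s)%:Z)%R.
    by move=> pos; apply: nSYs; split => // t [].
  by rewrite preY; lia.
have XsA : Xs s `<=` A by apply: subset_trans ZA; rewrite Zeq => t Xt; exists s.
have [_ [nfX | geX]] := XsY s SYs; first by case: nfX; exact: sub_finite_set fA.
have := sum_fset_set_sub_le (Fpost^~ s) fA XsA.
by move: geX; rewrite /post_sum preY; lia.
Qed.

End SetConfigurations.

Theorem mainTheorem8 (S : Type) (E : choiceType)
  (Fpre : S -> E -> nat) (Fpost : E -> S -> nat) (I : S -> nat) :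
  pure_net Fpre Fpost ->
  one_occurrence Fpre Fpost I ->
  forall X : E -> nat, fin_mset X ->
    net_config Fpre Fpost I X <->
    ((forall t, (X t <= 1)%N) /\
     left_closed_config (enablesN Fpre Fpost I) (msupp X)).
Proof.
move=> _ occ X fX; split=> [cX | [X1 lcX]].
- have X1 := occ X cX; split=> //.
  by apply: nonneg_marking_left_closed => //; apply/net_config_setE.
- by apply/net_config_setE => //; exact: left_closed_nonneg_marking.
Qed.
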